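(* Let $G$ be a group generated by $x_1,\dots,x_n$, with finite commutator subgroup $C=[G,G]$, such that $G/C$ is free abelian of rank $n$ with basis the images of $x_1,\dots,x_n$, and let $\Lambda\subseteq G$ be a generating set of $G$ closed under inversion. Then every element of $C$ can be written as a finite product of links $l_{\mathbf r,\lambda}$ with $\mathbf r\in\mathbb Z^n$ and $\lambda\in\Lambda$.
   Context: Notation: $\bar g=g^{-1}$. For $\mathbf r\in\mathbb Z^n$ put $g_{\mathbf r}=x_1^{r_1}\cdots x_n^{r_n}$. Every $g\in G$ decomposes uniquely as $g=g_{\mathbf r}c$ with $c\in C$; write $\mathbf r_g=\mathbf r$. The link is $l_{\mathbf r,\lambda}=\overline{g_{\mathbf r+\mathbf r_\lambda}}\,\lambda\,g_{\mathbf r}\in C$. *)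

From mathcomp Require Import all_boot all_algebra.
From Stdlib Require Import List.
Set Implicit Arguments. Unset Strict Implicit. Unset Printing Implicit Defensive.

Record group := Group {
  carrier :> Type;
  gmul : carrier -> carrier -> carrier;
  gone : carrier;
  ginv : carrier -> carrier;
  gmulA : forall a b c, gmul a (gmul b c) = gmul (gmul a b) c;
  gmul1 : forall a, gmul gone a = a;
  gmulV : forall a, gmul (ginv a) a = gone
}.

Section Defs.
Variable G : group.
Local Notation "a * b" := (gmul a b).

Inductive gen (S : G -> Prop) : G -> Prop :=
  | gen_one : gen S (gone G)
  | gen_mem : forall a, S a -> gen S a
  | gen_mul : forall a b, gen S a -> gen S b -> gen S (a * b)
  | gen_inv : forall a, gen S a -> gen S (ginv a).

Definition comm (a b : G) : G := ginv a * (ginv b * (a * b)).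

Definition commutator_subgroup : G -> Prop :=
  gen (fun c => exists a b, c = comm a b).

Definition zpow (a : G) (k : int) : G :=
  match k with
  | Posz m => iter m (@gmul G a) (gone G)
  | Negz m => ginv (iter m.+1 (@gmul G a) (gone G))
  end.

Definition gvec n (x : 'I_n -> G) (r : 'I_n -> int) : G :=
  foldr (@gmul G) (gone G) [seq zpow (x i) (r i) | i <- enum 'I_n].

Definition gprod (s : list G) : G := foldr (@gmul G) (gone G) s.

(* l is a link l_{r,lambda} = (g_{r + r_lambda})^{-1} lambda g_r with lambda in Lambda,
   where r_lambda is the (unique) vector with lambda in g_{r_lambda} C. *)
Definition is_link n (x : 'I_n -> G) (Lambda : G -> Prop) (l : G) : Prop :=
  exists (r rl : 'I_n -> int) (lam : G),
    Lambda lam /\ commutator_subgroup (ginv (gvec x rl) * lam) /\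
    l = ginv (gvec x (fun i => r i + rl i)%R) * lam * gvec x r.
End Defs.

From Stdlib Require Import List.
From mathcomp Require Import all_boot all_algebra zify.
Set Implicit Arguments. Unset Strict Implicit. Unset Printing Implicit Defensive.

(* Write c = lam_1 ... lam_k with lam_i in Lambda, and pick vectors s_k = 0,
   s_(i-1) = s_i + r_(lam_i).  Then the product of the links l_(s_i, lam_i)
   telescopes to g_(s_0)^-1 c.  Modulo C we have g_(s_0) = c = 1, so s_0 = 0 by
   the independence of the x_i in G/C, whence g_(s_0) = 1. *)

Section GroupFacts.
Variable G : group.
Local Notation "a * b" := (@gmul G a b).
Local Notation "a ^-1" := (@ginv G a).
Local Notation one := (gone G).

Lemma mulgV (a : G) : a * a^-1 = one.
Proof.
have -> : a * a^-1 = (a^-1^-1 * a^-1) * (a * a^-1) by rewrite gmulV gmul1.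
by rewrite -gmulA (gmulA a^-1 a) gmulV gmul1 gmulV.
Qed.

Lemma mulg1 (a : G) : a * one = a.
Proof. by rewrite -(gmulV a) gmulA mulgV gmul1. Qed.

Lemma mulKg (a b : G) : a^-1 * (a * b) = b.
Proof. by rewrite gmulA gmulV gmul1. Qed.

Lemma mulKVg (a b : G) : a * (a^-1 * b) = b.
Proof. by rewrite gmulA mulgV gmul1. Qed.

Lemma invg_unique (a b : G) : a * b = one -> a = b^-1.
Proof. by move=> ab1; rewrite -(mulg1 a) -(mulgV b) gmulA ab1 gmul1. Qed.

Lemma invgK (a : G) : a^-1^-1 = a.
Proof. by symmetry; apply: invg_unique; apply: mulgV. Qed.

Lemma invMg (a b : G) : (a * b)^-1 = b^-1 * a^-1.
Proof. by symmetry; apply: invg_unique; rewrite -gmulA mulKg gmulV. Qed.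

Lemma invg1 : one^-1 = one.
Proof. by symmetry; apply: invg_unique; apply: gmul1. Qed.

End GroupFacts.

Section CongruenceModCommutator.
Variable G : group.
Local Notation "a * b" := (@gmul G a b).
Local Notation "a ^-1" := (@ginv G a).
Local Notation one := (gone G).
Local Notation C := (@commutator_subgroup G).

Lemma commutator_conj (a c : G) : C c -> C (a^-1 * c * a).
Proof.
move=> Cc; have -> : a^-1 * c * a = c * comm c a by rewrite /comm mulKVg gmulA.
by apply: gen_mul Cc _; apply: gen_mem; exists c, a.
Qed.

Definition congC (a b : G) : Prop := C (a^-1 * b).

Lemma congC_refl (a : G) : congC a a.
Proof. by rewrite /congC gmulV; apply: gen_one. Qed.

Lemma congC_trans (a b c : G) : congC a b -> congC b c -> congC a c.
Proof. by move=> ab bc; have := gen_mul ab bc; rewrite -gmulA mulKVg. Qed.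

Lemma congC_mul (a a' b b' : G) :
  congC a a' -> congC b b' -> congC (a * b) (a' * b').
Proof.
move=> aa' bb'; rewrite /congC.
have -> : (a * b)^-1 * (a' * b') = (b^-1 * (a^-1 * a') * b) * (b^-1 * b').
  by rewrite invMg -!gmulA mulKVg.
exact: gen_mul (commutator_conj _ aa') bb'.
Qed.

Lemma congC_mulC (a b : G) : congC (a * b) (b * a).
Proof. by rewrite /congC invMg -gmulA; apply: gen_mem; exists b, a. Qed.

Lemma congC_inv (a b : G) : congC a b -> congC a^-1 b^-1.
Proof.
rewrite /congC invgK => ab; have := commutator_conj a^-1 (gen_inv ab).
by rewrite invgK invMg invgK -!gmulA mulgV mulg1.
Qed.

Lemma congC_inv_of_mul1 (a b : G) : congC one (a * b) -> congC a b^-1.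
Proof.
rewrite /congC invg1 gmul1 -invMg => Cab; apply: gen_inv.
by have := commutator_conj a Cab; rewrite mulKg.
Qed.

Lemma congC_mem (a b : G) : congC a b -> C b -> C a.
Proof. by move=> ab Cb; have := gen_mul Cb (gen_inv ab); rewrite invMg invgK mulKVg. Qed.

End CongruenceModCommutator.

Section IntegerPowers.
Variable G : group.
Local Notation "a * b" := (@gmul G a b).
Local Notation "a ^-1" := (@ginv G a).
Local Notation one := (gone G).

Lemma iter_mul_comm (a : G) m : a * iter m (gmul a) one = iter m (gmul a) one * a.
Proof.
elim: m => [|m IHm] /=; first by rewrite mulg1 gmul1.
by rewrite {1}IHm gmulA.
Qed.

Lemma zpowD1 (a : G) (k : int) : zpow a (k + 1)%R = a * zpow a k.
Proof.
case: k => [m|[|m]]; first by rewrite -PoszD addn1.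
  by rewrite /= mulg1 mulgV.
have -> : (Negz m.+1 + 1 = Negz m)%R by rewrite !NegzE; lia.
have /= a_comm := iter_mul_comm a m.+1.
by rewrite /= a_comm [(_ * a)^-1]invMg mulKVg.
Qed.

Lemma zpowB1 (a : G) (k : int) : zpow a (k - 1)%R = a^-1 * zpow a k.
Proof. by have := zpowD1 a (k - 1)%R; rewrite GRing.subrK => ->; rewrite mulKg. Qed.

Lemma zpowD (a : G) (m k : int) : zpow a (m + k)%R = zpow a m * zpow a k.
Proof.
case: m => [p|p]; elim: p => [|p IHp].
- by rewrite GRing.add0r gmul1.
- have -> : (Posz p.+1 + k = (Posz p + k) + 1)%R by lia.
  have -> : Posz p.+1 = (Posz p + 1)%R by lia.
  by rewrite !zpowD1 IHp gmulA.
- have -> : (Negz 0 + k = k - 1)%R by rewrite NegzE; lia.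
  by rewrite zpowB1 /= mulg1.
- have -> : (Negz p.+1 + k = (Negz p + k) - 1)%R by rewrite !NegzE; lia.
  have -> : Negz p.+1 = (Negz p - 1)%R by rewrite !NegzE; lia.
  by rewrite !zpowB1 IHp gmulA.
Qed.

End IntegerPowers.

Section Monomials.
Variables (G : group) (n : nat) (x : 'I_n -> G).
Local Notation "a * b" := (@gmul G a b).
Local Notation "a ^-1" := (@ginv G a).
Local Notation one := (gone G).

Definition gvec_seq (r : 'I_n -> int) (s : seq 'I_n) : G :=
  foldr (@gmul G) one [seq zpow (x i) (r i) | i <- s].

Lemma gvec_seqD (r r' : 'I_n -> int) s :
  congC (gvec_seq (fun i => r i + r' i)%R s) (gvec_seq r s * gvec_seq r' s).
Proof.
elim: s => [|i s IHs] /=; first by rewrite gmul1; apply: congC_refl.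
rewrite /gvec_seq /= -/(gvec_seq _ s) -/(gvec_seq r s) -/(gvec_seq r' s) zpowD.
apply: congC_trans (congC_mul (congC_refl _) IHs) _.
rewrite -!gmulA; apply: congC_mul (congC_refl _) _.
by rewrite !gmulA; apply: congC_mul (congC_mulC _ _) (congC_refl _).
Qed.

Lemma gvecD (r r' : 'I_n -> int) :
  congC (gvec x (fun i => r i + r' i)%R) (gvec x r * gvec x r').
Proof. exact: gvec_seqD. Qed.

Lemma gvec_seq0 (r : 'I_n -> int) s : (forall i, r i = 0%R) -> gvec_seq r s = one.
Proof.
move=> r0; elim: s => [|i s IHs] //.
by rewrite /gvec_seq /= -/(gvec_seq r s) IHs r0 mulg1.
Qed.

Lemma gvec0 (r : 'I_n -> int) : (forall i, r i = 0%R) -> gvec x r = one.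
Proof. exact: gvec_seq0. Qed.

Lemma gvec_seq_delta (i : 'I_n) s : uniq s ->
  gvec_seq (fun j => if j == i then 1 else 0)%R s = if i \in s then x i else one.
Proof.
elim: s => [|j s IHs] //= /andP [js s_uniq].
rewrite /gvec_seq /= -/(gvec_seq _ s) IHs // in_cons; have [<-|_] := eqVneq j i; last by rewrite gmul1.
by rewrite (negbTE js) /= !mulg1.
Qed.

Lemma gvec_delta (i : 'I_n) : gvec x (fun j => if j == i then 1 else 0)%R = x i.
Proof. by rewrite [gvec _ _]gvec_seq_delta ?enum_uniq ?mem_enum. Qed.

Lemma gvec_congC_surj : (forall g : G, gen (fun a => exists i, a = x i) g) ->
  forall g : G, exists r, congC (gvec x r) g.
Proof.
move=> x_gen g; elim: (x_gen g) => {g}.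
- by exists (fun _ => 0%R); rewrite gvec0 //; apply: congC_refl.
- move=> _ [i ->]; exists (fun j => if j == i then 1 else 0)%R.
  by rewrite gvec_delta; apply: congC_refl.
- move=> a b _ [r ra] _ [r' r'b]; exists (fun i => r i + r' i)%R.
  exact: congC_trans (gvecD r r') (congC_mul ra r'b).
- move=> a _ [r ra]; exists (fun i => - r i)%R.
  apply: congC_trans (congC_inv ra); apply: congC_inv_of_mul1.
  have gvec_Nrr : gvec x (fun i => - r i + r i)%R = one.
    by apply: gvec0 => i; rewrite GRing.addNr.
  by rewrite -gvec_Nrr; apply: gvecD.
Qed.

End Monomials.

Section Products.
Variable G : group.
Local Notation "a * b" := (@gmul G a b).
Local Notation "a ^-1" := (@ginv G a).

Lemma gprod_cat (s s' : list G) : gprod (s ++ s')%list = gprod s * gprod s'.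
Proof. by elim: s => [|a s IHs] /=; rewrite ?gmul1 // IHs gmulA. Qed.

Lemma gprod_rev_inv (s : list G) : gprod (List.rev (List.map (@ginv G) s)) = (gprod s)^-1.
Proof. by elim: s => [|a s IHs] /=; rewrite ?invg1 // gprod_cat IHs /= mulg1 invMg. Qed.

Lemma gen_gprod (Lambda : G -> Prop) :
  (forall lam, Lambda lam -> Lambda lam^-1) ->
  forall g, gen Lambda g ->
  exists s : list G, (forall l, List.In l s -> Lambda l) /\ g = gprod s.
Proof.
move=> Lambda_inv g; elim => {g}.
- by exists nil.
- move=> a Lambda_a; exists (a :: nil); split; first by move=> l [<-|[]].
  by rewrite /= mulg1.
- move=> a b _ [s [Ls ->]] _ [s' [Ls' ->]]; exists (s ++ s')%list; split.
    by move=> l /(in_app_or s s' l) [/Ls | /Ls'].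
  by rewrite gprod_cat.
- move=> a _ [s [Ls ->]]; exists (List.rev (List.map (@ginv G) s)).
  split; last by rewrite gprod_rev_inv.
  move=> l l_in.
  by have [l' [<- /Ls /Lambda_inv]] := proj1 (in_map_iff _ _ _) (proj2 (in_rev _ _) l_in).
Qed.

End Products.

Section Links.
Variables (G : group) (n : nat) (x : 'I_n -> G) (Lambda : G -> Prop).
Hypothesis x_gen : forall g : G, gen (fun a => exists i, a = x i) g.
Local Notation "a * b" := (@gmul G a b).
Local Notation "a ^-1" := (@ginv G a).

Lemma gprod_links_telescope (s : list G) :
  (forall l, List.In l s -> Lambda l) -> forall t : 'I_n -> int,
  exists (r : 'I_n -> int) (ls : list G),
    [/\ forall l, List.In l ls -> is_link x Lambda l,
        gprod ls = (gvec x r)^-1 * gprod s * gvec x t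
      & congC (gvec x r) (gprod s * gvec x t)].
Proof.
elim: s => [|lam s IHs] Ls t.
  exists t, nil; split=> //=; first by rewrite mulg1 gmulV.
  by rewrite gmul1; apply: congC_refl.
have [r [ls [ls_links ls_prod r_cong]]] := IHs (fun l sl => Ls l (or_intror sl)) t.
have [rl rl_cong] := gvec_congC_surj x_gen lam.
exists (fun i => r i + rl i)%R, ((gvec x (fun i => r i + rl i)%R)^-1 * lam * gvec x r :: ls).
split.
- move=> l [<-|]; last exact: ls_links.
  by exists r, rl, lam; split; first exact: Ls lam (or_introl erefl).
- by rewrite /= ls_prod -!gmulA (gmulA (gvec x r)) mulgV gmul1.
- apply: congC_trans (gvecD _ _ _) (congC_trans (congC_mulC _ _) _).
  by rewrite /= -gmulA; apply: congC_mul.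
Qed.

End Links.

Theorem lemma1 (G : group) (n : nat) (x : 'I_n -> G) (Lambda : G -> Prop) :
  (* G is generated by x_1, ..., x_n *)
  (forall g : G, gen (fun a => exists i, a = x i) g) ->
  (* C = [G,G] is finite *)
  (exists s : list G, forall c, commutator_subgroup c -> List.In c s) ->
  (* the images of x_1..x_n in G/C are linearly independent (they span since the
     x_i generate G), i.e. G/C is free abelian with basis the images of the x_i *)
  (forall r : 'I_n -> int, commutator_subgroup (gvec x r) -> forall i, r i = 0%R) ->
  (* Lambda generates G and is closed under inversion *)
  (forall g : G, gen Lambda g) ->
  (forall lam : G, Lambda lam -> Lambda (ginv lam)) ->
  forall c : G, commutator_subgroup c ->
    exists ls : list G, (forall l, List.In l ls -> is_link x Lambda l) /\ c = gprod ls.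
Proof.
move=> x_gen _ x_indep Lambda_gen Lambda_inv c Cc.
have [s [Ls c_prod]] := gen_gprod Lambda_inv (Lambda_gen c).
have [r [ls [ls_links ls_prod r_cong]]] :=
  gprod_links_telescope x_gen Ls (fun _ => 0%R).
have gvec_t1 : gvec x (fun _ => 0%R) = gone G by rewrite gvec0.
rewrite gvec_t1 !mulg1 -c_prod in ls_prod r_cong.
have gvec_r1 : gvec x r = gone G by apply/gvec0/x_indep; apply: congC_mem r_cong Cc.
by exists ls; split; rewrite // ls_prod gvec_r1 invg1 gmul1.
Qed.
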